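(* Let $n, m \ge 1$. Let $F \in \mathbb{R}^{n\times n}$ (state transition matrix) and $H \in \mathbb{R}^{m\times n}$ (measurement matrix) be known, with $H$ of full row rank $m$, and let $Q \in \mathbb{R}^{n\times n}$ and $R \in \mathbb{R}^{m\times m}$ (process and measurement noise covariances) be known symmetric positive definite matrices. Let $\tilde{x}_{t-1} \in \mathbb{R}^n$ and a symmetric positive semidefinite $\tilde{P}_{t-1} \in \mathbb{R}^{n\times n}$ be the previous state estimate and covariance. Define the Kalman prediction $$\hat{x}_t = F\tilde{x}_{t-1}, \qquad \hat{P}_t = F\tilde{P}_{t-1}F^T + Q,$$ and, for an observed measurement $\hat{z}_t \in \mathbb{R}^m$, the Kalman update $$K_t = \hat{P}_t H^T (H\hat{P}_t H^T + R)^{-1}, \qquad \tilde{x}_t = \hat{x}_t + K_t(\hat{z}_t - H\hat{x}_t), \qquad \tilde{P}_t = (I - K_t H)\hat{P}_t .$$ Consider the a-priori distribution $\mathcal{N}(\hat{x}_t, \hat{P}_t)$ and the a-posteriori distribution $\mathcal{N}(\tilde{x}_t, \tilde{P}_t)$ on $\mathbb{R}^n$, and the function $$D(\hat{z}_t) = D_{KL}\big(\mathcal{N}(\hat{x}_t,\hat{P}_t)\,\|\,\mathcal{N}(\tilde{x}_t,\tilde{P}_t)\big).$$ Then minimizing the residual $\|\hat{z}_t - H\hat{x}_t\|_2$ over $\hat{z}_t \in \mathbb{R}^m$ is equivalent to minimizing $D(\hat{z}_t)$ over $\hat{z}_t \in \mathbb{R}^m$; that is, the set of minimizers of $\hat{z}_t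 \mapsto \|\hat{z}_t - H\hat{x}_t\|_2$ coincides with the set of minimizers of $\hat{z}_t \mapsto D(\hat{z}_t)$.
   Context: $D_{KL}(p\|q) = \mathbb{E}_{p}[\log p - \log q]$ denotes the Kullback–Leibler divergence; for Gaussians on $\mathbb{R}^n$, $D_{KL}(\mathcal{N}(\mu_0,\Sigma_0)\|\mathcal{N}(\mu_1,\Sigma_1)) = \tfrac12\big(\log\frac{\det\Sigma_1}{\det\Sigma_0} - n + \mathrm{tr}(\Sigma_1^{-1}\Sigma_0) + (\mu_1-\mu_0)^T\Sigma_1^{-1}(\mu_1-\mu_0)\big)$. The setting is the linear Kalman filter model $x_t = Fx_{t-1} + \omega$, $\omega \sim \mathcal{N}(0,Q)$, $z_t = Hx_t + \nu$, $\nu \sim \mathcal{N}(0,R)$. *)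

From HB Require Import structures.
From mathcomp Require Import all_boot all_order all_algebra.
From mathcomp Require Import all_classical all_reals all_analysis.
Set Implicit Arguments. Unset Strict Implicit. Unset Printing Implicit Defensive.
Import Order.TTheory GRing.Theory Num.Theory.
Local Open Scope ring_scope.

Definition sym_posdef {R : realType} (n : nat) (A : 'M[R]_n) : Prop :=
  A^T = A /\ forall v : 'cV[R]_n, v != 0 -> 0 < (v^T *m A *m v) 0 0.

Definition sym_psd {R : realType} (n : nat) (A : 'M[R]_n) : Prop :=
  A^T = A /\ forall v : 'cV[R]_n, 0 <= (v^T *m A *m v) 0 0.

Definition norm2 {R : realType} (k : nat) (v : 'cV[R]_k) : R :=
  Num.sqrt (\sum_(i < k) v i 0 ^+ 2).

(* KL divergence D_KL(N(mu0,S0) || N(mu1,S1)) on R^n, by the closed-form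
   Gaussian formula given in the paper's context. *)
Definition gauss_KL {R : realType} (n : nat) (mu0 : 'cV[R]_n) (S0 : 'M[R]_n)
    (mu1 : 'cV[R]_n) (S1 : 'M[R]_n) : R :=
  (ln (\det S1 / \det S0) - n%:R + \tr (invmx S1 *m S0)
    + ((mu1 - mu0)^T *m invmx S1 *m (mu1 - mu0)) 0 0) / 2.

Definition kf_xhat {R : realType} n (F : 'M[R]_n) (x : 'cV[R]_n) : 'cV[R]_n := F *m x.
Definition kf_Phat {R : realType} n (F Q P : 'M[R]_n) : 'M[R]_n := F *m P *m F^T + Q.
Definition kf_gain {R : realType} n m (H : 'M[R]_(m, n)) (Rm : 'M[R]_m)
    (Ph : 'M[R]_n) : 'M[R]_(n, m) :=
  Ph *m H^T *m invmx (H *m Ph *m H^T + Rm).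
Definition kf_xtil {R : realType} n m (H : 'M[R]_(m, n)) (K : 'M[R]_(n, m))
    (xh : 'cV[R]_n) (z : 'cV[R]_m) : 'cV[R]_n :=
  xh + K *m (z - H *m xh).
Definition kf_Ptil {R : realType} n m (H : 'M[R]_(m, n)) (K : 'M[R]_(n, m))
    (Ph : 'M[R]_n) : 'M[R]_n :=
  (1%:M - K *m H) *m Ph.

From HB Require Import structures.
From mathcomp Require Import all_boot all_order all_algebra.
From mathcomp Require Import all_classical all_reals all_analysis.
Set Implicit Arguments. Unset Strict Implicit. Unset Printing Implicit Defensive.
Import Order.TTheory GRing.Theory Num.Theory.
Local Open Scope ring_scope.

(* Both objectives have the shape [z |-> c0 + q (z - H xh)] with [q] positive
   definite, so both are minimized exactly at [z = H xh].  For the Gaussian KL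
   divergence, only the mean of the posterior depends on [z], and it does so
   through [xh + K (z - H xh)]; hence [q r = (K r)^T Pt^-1 (K r) / 2].  Writing
   [S = H Ph H^T + Rm] and [r = S u], the update equations give
   [q (S u) = ((H Ph H^T u)^T Rm^-1 (H Ph H^T u) + (H^T u)^T Ph (H^T u)) / 2],
   which is positive for [u != 0] since [H^T] is injective. *)

Lemma minimizer_shift_definite (V : zmodType) (R : numDomainType)
    (f q : V -> R) (c : V) :
  q 0 = 0 -> (forall r, r != 0 -> 0 < q r) ->
  (forall z, f z = f c + q (z - c)) ->
  forall z, (forall z', f z <= f z') <-> z = c.
Proof.
move=> q0 q_gt0 fE z; split=> [fz_min | -> z'].
  have := fz_min c; rewrite fE -{2}[f c]addr0 lerD2l.
  have [/subr0_eq -> //|/q_gt0 qr_gt0] := eqVneq (z - c) 0.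
  by move/(lt_le_trans qr_gt0); rewrite ltxx.
rewrite [f z']fE lerDl; have [->|/q_gt0/ltW //] := eqVneq (z' - c) 0.
by rewrite q0.
Qed.

Section Norm2.
Variable R : realType.

Lemma norm2_0 k : norm2 (0 : 'cV[R]_k) = 0.
Proof. by rewrite /norm2 big1 ?sqrtr0 // => i _; rewrite mxE expr0n. Qed.

Lemma norm2_gt0 k (v : 'cV[R]_k) : v != 0 -> 0 < norm2 v.
Proof.
move=> v_neq0; rewrite /norm2 sqrtr_gt0 lt0r sumr_ge0 ?andbT; last first.
  by move=> i _; rewrite sqr_ge0.
rewrite psumr_neq0 => [|i _]; last by rewrite sqr_ge0.
apply: contraNT v_neq0 => /hasPn v0; apply/eqP/matrixP => i j.
rewrite ord1 !mxE; have := v0 i (mem_index_enum i).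
by rewrite /= lt0r sqr_ge0 sqrf_eq0 andbT negbK => /eqP.
Qed.

End Norm2.

Section PositiveDefinite.
Variable R : realType.

Lemma sym_posdef_psd k (A : 'M[R]_k) : sym_posdef A -> sym_psd A.
Proof.
move=> [sA A_gt0]; split=> // v; have [->|/A_gt0/ltW //] := eqVneq v 0.
by rewrite mulmx0 mxE.
Qed.

Lemma sym_posdef_unit k (A : 'M[R]_k) : sym_posdef A -> A \in unitmx.
Proof.
move=> [_ A_gt0]; rewrite unitmxE unitfE; apply/det0P => -[v v_neq0 vA].
have := A_gt0 v^T; rewrite trmx_eq0 trmxK vA mul0mx mxE ltxx.
by move/(_ v_neq0).
Qed.

Lemma sym_posdef_inv k (A : 'M[R]_k) : sym_posdef A -> sym_posdef (invmx A).
Proof.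
move=> hA; have uA := sym_posdef_unit hA; have [sA A_gt0] := hA.
split=> [|v v_neq0]; first by rewrite trmx_inv sA.
have -> : v^T *m invmx A *m v = (invmx A *m v)^T *m A *m (invmx A *m v).
  by rewrite trmx_mul trmx_inv sA !mulmxA mulmxKV.
apply: A_gt0; apply: contraNneq v_neq0 => Av0.
by rewrite -(mulKVmx uA v) Av0 mulmx0.
Qed.

Lemma sym_psd_conj k l (C : 'M[R]_(k, l)) (B : 'M[R]_l) :
  sym_psd B -> sym_psd (C *m B *m C^T).
Proof.
move=> [sB B_ge0]; split=> [|v]; first by rewrite !trmx_mul trmxK sB mulmxA.
have -> : v^T *m (C *m B *m C^T) *m v = (C^T *m v)^T *m B *m (C^T *m v).
  by rewrite trmx_mul trmxK !mulmxA.
exact: B_ge0.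
Qed.

Lemma sym_psd_posdefD k (A B : 'M[R]_k) :
  sym_psd A -> sym_posdef B -> sym_posdef (A + B).
Proof.
move=> [sA A_ge0] [sB B_gt0]; split=> [|v v_neq0].
  by rewrite raddfD /= sA sB.
by rewrite mulmxDr mulmxDl mxE ltr_wpDl ?A_ge0 ?B_gt0.
Qed.

Lemma row_free_trmx_neq0 k l (A : 'M[R]_(k, l)) (u : 'cV[R]_k) :
  row_free A -> u != 0 -> A^T *m u != 0.
Proof.
move=> freeA; apply: contraNneq => Au0; rewrite -trmx_eq0.
by rewrite -(mulmx_free_eq0 _ freeA) -[_ *m A]trmxK trmx_mul trmxK Au0 trmx0.
Qed.

End PositiveDefinite.

Lemma gauss_KL_mean_shift (R : realType) n (mu0 : 'cV[R]_n) (S0 : 'M[R]_n)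
    (d : 'cV[R]_n) (S1 : 'M[R]_n) :
  gauss_KL mu0 S0 (mu0 + d) S1
    = gauss_KL mu0 S0 mu0 S1 + (d^T *m invmx S1 *m d) 0 0 / 2.
Proof.
rewrite /gauss_KL [mu0 + d]addrC addrK subrr mulmx0 [(0 : 'M[R]_1) _ _]mxE.
by rewrite addr0 mulrDl.
Qed.

Lemma kf_Phat_posdef (R : realType) n (F Q P : 'M[R]_n) :
  sym_psd P -> sym_posdef Q -> sym_posdef (kf_Phat F Q P).
Proof. by move=> hP hQ; apply: sym_psd_posdefD => //; exact: sym_psd_conj. Qed.

Section KalmanUpdate.
Variables (R : realType) (n m : nat).
Variables (H : 'M[R]_(m, n)) (Rm : 'M[R]_m) (Ph : 'M[R]_n).
Hypotheses (hH : \rank H = m) (hR : sym_posdef Rm) (hPh : sym_posdef Ph).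

Let A := H *m Ph *m H^T.
Let S := A + Rm.
Let K := kf_gain H Rm Ph.
Let Pt := kf_Ptil H K Ph.

Lemma innovation_cov_posdef : sym_posdef S.
Proof. exact/sym_psd_posdefD/hR/sym_psd_conj/sym_posdef_psd. Qed.

Let uS : S \in unitmx := sym_posdef_unit innovation_cov_posdef.
Let uR : Rm \in unitmx := sym_posdef_unit hR.

Lemma kf_gain_mul_innovation_cov : K *m S = Ph *m H^T.
Proof. by rewrite /K /kf_gain mulmxKV. Qed.

Lemma kf_Ptil_information_gain : Pt *m (H^T *m invmx Rm) = K.
Proof.
have KA : K *m H *m Ph *m H^T = Ph *m H^T - K *m Rm.
  by rewrite -kf_gain_mul_innovation_cov mulmxDr addrK /A !mulmxA.
rewrite /Pt /kf_Ptil -mulmxA mulmxBl mul1mx !mulmxA KA mulmxBl mulmxK //.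
by rewrite opprB addrC subrK.
Qed.

Lemma kf_Ptil_unit : Pt \in unitmx.
Proof.
suff /mulmx1_unit[] : Pt *m (invmx Ph + H^T *m invmx Rm *m H) = 1%:M by [].
rewrite mulmxDr mulmxA kf_Ptil_information_gain /Pt /kf_Ptil -mulmxA.
by rewrite mulmxV ?sym_posdef_unit // mulmx1 subrK.
Qed.

Lemma kf_gain_quad_innovation_cov (u : 'cV[R]_m) :
  (K *m (S *m u))^T *m invmx Pt *m (K *m (S *m u))
    = (A *m u)^T *m invmx Rm *m (A *m u) + (H^T *m u)^T *m Ph *m (H^T *m u).
Proof.
have iPtK : invmx Pt *m K = H^T *m invmx Rm.
  by rewrite -kf_Ptil_information_gain mulKmx ?kf_Ptil_unit.
rewrite -mulmxA.
have -> : invmx Pt *m (K *m (S *m u)) = H^T *m invmx Rm *m (S *m u).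
  by rewrite -iPtK !mulmxA.
rewrite [K *m _]mulmxA kf_gain_mul_innovation_cov !trmx_mul trmxK (proj1 hPh).
by rewrite /S /A mulmxDl !mulmxDr !mulmxA mulmxKV.
Qed.

Lemma kf_gain_quad_gt0 (r : 'cV[R]_m) :
  r != 0 -> 0 < ((K *m r)^T *m invmx Pt *m (K *m r)) 0 0.
Proof.
move=> r_neq0; rewrite -(mulKVmx uS r) kf_gain_quad_innovation_cov mxE.
have u_neq0 : invmx S *m r != 0.
  by apply: contraNneq r_neq0 => u0; rewrite -(mulKVmx uS r) u0 mulmx0.
apply: ltr_wpDl.
  exact: (proj2 (sym_posdef_psd (sym_posdef_inv hR))).
by apply: (proj2 hPh); apply: row_free_trmx_neq0; rewrite // /row_free hH.
Qed.

End KalmanUpdate.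

Theorem theorem1 (R : realType) (n m : nat) (hn : (0 < n)%N) (hm : (0 < m)%N)
    (F : 'M[R]_n) (H : 'M[R]_(m, n)) (Q : 'M[R]_n) (Rm : 'M[R]_m)
    (x_prev : 'cV[R]_n) (P_prev : 'M[R]_n)
    (hH : \rank H = m) (hQ : sym_posdef Q) (hR : sym_posdef Rm)
    (hP : sym_psd P_prev) :
  let xh := kf_xhat F x_prev in
  let Ph := kf_Phat F Q P_prev in
  let K := kf_gain H Rm Ph in
  let D := fun z : 'cV[R]_m => gauss_KL xh Ph (kf_xtil H K xh z) (kf_Ptil H K Ph) in
  forall z : 'cV[R]_m,
    (forall z' : 'cV[R]_m, norm2 (z - H *m xh) <= norm2 (z' - H *m xh)) <->
    (forall z' : 'cV[R]_m, D z <= D z').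
Proof.
move=> xh Ph K D z.
have hPh : sym_posdef Ph by apply: kf_Phat_posdef.
pose q (r : 'cV[R]_m) := ((K *m r)^T *m invmx (kf_Ptil H K Ph) *m (K *m r)) 0 0 / 2.
have norm2_min : (forall z', norm2 (z - H *m xh) <= norm2 (z' - H *m xh))
    <-> z = H *m xh.
  apply: (minimizer_shift_definite (f := fun y => norm2 (y - H *m xh))
    (norm2_0 R m) (@norm2_gt0 R m)) => y.
  by rewrite subrr norm2_0 add0r.
have D_min : (forall z', D z <= D z') <-> z = H *m xh.
  apply: (minimizer_shift_definite (q := q)) => [|r r_neq0|z'].
  - by rewrite /q !mulmx0 mxE mul0r.
  - by rewrite /q divr_gt0 ?kf_gain_quad_gt0.
  - rewrite /D /kf_xtil !gauss_KL_mean_shift subrr !mulmx0.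
    by rewrite [(0 : 'M[R]_1) _ _]mxE mul0r addr0.
exact: iff_trans norm2_min (iff_sym D_min).
Qed.
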